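(* Let $0\to(M,\alpha_M)\to(K,\alpha_K)\xrightarrow{\pi}(L,\alpha_L)\to0$ and $0\to(N,\alpha_N)\to(F,\alpha_F)\xrightarrow{\rho}(K,\alpha_K)\to0$ be central extensions of Hom-Leibniz $n$-algebras with $(K,\alpha_K)$ perfect. Then $0\to P=\ker(\pi\circ\rho)\to(F,\alpha_F)\xrightarrow{\pi\circ\rho}(L,\alpha_L)\to0$ is an $\alpha$-central extension. Moreover, if $\pi$ is a universal $\alpha$-central extension, then $\rho$ splits, i.e. there is a homomorphism $\sigma:(K,\alpha_K)\to(F,\alpha_F)$ with $\rho\circ\sigma=\mathrm{id}_K$.
   Context: Fix a field $\mathbb K$ and $n\ge2$. A (multiplicative) Hom-Leibniz $n$-algebra is a $\mathbb K$-vector space $L$ with an $n$-linear bracket and a linear map $\alpha_L$ preserving the bracket, satisfying $[[x_1,\dots,x_n],\alpha_L(y_1),\dots,\alpha_L(y_{n-1})]=\sum_{i=1}^n[\alpha_L(x_1),\dots,[x_i,y_1,\dots,y_{n-1}],\dots,\alpha_L(x_n)]$. Homomorphisms preserve brackets and commute with twisting maps. Perfect: $K=[K,\dots,K]$. The center $Z(K)$ consists of $x$ with every bracket having $x$ in some position equal to $0$. An extension of $L$ is a surjective homomorphism $\pi:K\to L$ with kernel $M$; central if $M\subseteq Z(K)$; $\alpha$-central if every bracket with $n-1$ entries in $\alpha_K(M)$ and the remaining entry (any position) in $K$ vanishes. A central extension $\pi:K\to L$ is universal $\alpha$-central if for every $\alpha$-central extension $\pi':K'\to L$ there is a unique homomorphism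 $h:K\to K'$ with $\pi'\circ h=\pi$. *)

From HB Require Import structures.
From mathcomp Require Import all_boot all_order all_algebra.
Set Implicit Arguments. Unset Strict Implicit. Unset Printing Implicit Defensive.
Import GRing.Theory.
Local Open Scope ring_scope.

Definition is_lin (R : fieldType) (U V : lmodType R) (f : U -> V) : Prop :=
  forall (a : R) (u v : U), f (a *: u + v) = a *: f u + f v.

Definition upd (T : Type) (n : nat) (x : 'I_n -> T) (i : 'I_n) (v : T) : 'I_n -> T :=
  fun j => if j == i then v else x j.

Definition multilinear (R : fieldType) (V : lmodType R) (n : nat)
  (br : ('I_n -> V) -> V) : Prop :=
  forall (x : 'I_n -> V) (i : 'I_n), is_lin (fun v : V => br (upd x i v)).

(* The (n-1)-tuple (y_1,...,y_{n-1}) is encoded as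
   y : 'I_n -> V using positions 1..n-1 (y at position 0 is ignored):
   [[x_1..x_n], a(y_1),..,a(y_{n-1})]
     = sum_i [a(x_1),..,[x_i,y_1,..,y_{n-1}],..,a(x_n)]. *)
Definition hom_leibniz_id (R : fieldType) (V : lmodType R) (n : nat)
  (br : ('I_n -> V) -> V) (alpha : V -> V) : Prop :=
  forall (x y : 'I_n -> V),
    br (fun j : 'I_n => if nat_of_ord j == 0%N then br x else alpha (y j))
    = \sum_(i < n)
        br (fun j : 'I_n =>
              if j == i
              then br (fun k : 'I_n => if nat_of_ord k == 0%N then x i else y k)
              else alpha (x j)).

Record hlalg (R : fieldType) (n : nat) := HLAlg {
  carrier : lmodType R;
  bracket : ('I_n -> carrier) -> carrier;
  twist : carrier -> carrier;
  bracket_multilinear : multilinear bracket;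
  twist_linear : is_lin twist;
  twist_multiplicative : forall x : 'I_n -> carrier, twist (bracket x) = bracket (fun j => twist (x j));
  hom_leibniz : hom_leibniz_id bracket twist
}.
Coercion carrier : hlalg >-> lmodType.

Definition is_hom (R : fieldType) (n : nat) (A B : hlalg R n) (f : A -> B) : Prop :=
  [/\ is_lin f,
      forall x : 'I_n -> A, f (bracket x) = bracket (fun j => f (x j))
    & forall a : A, f (twist a) = twist (f a)].

Definition perfect (R : fieldType) (n : nat) (A : hlalg R n) : Prop :=
  forall a : A, exists s : seq (R * ('I_n -> A)),
    a = \sum_(p <- s) p.1 *: bracket p.2.

Definition in_center (R : fieldType) (n : nat) (A : hlalg R n) (a : A) : Prop :=
  forall (x : 'I_n -> A) (i : 'I_n), bracket (upd x i a) = 0.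

Definition extension (R : fieldType) (n : nat) (A B : hlalg R n) (f : A -> B) : Prop :=
  is_hom f /\ (forall b : B, exists a : A, f a = b).

Definition central_ext (R : fieldType) (n : nat) (A B : hlalg R n) (f : A -> B) : Prop :=
  extension f /\ (forall a : A, f a = 0 -> in_center a).

Definition alpha_central_ext (R : fieldType) (n : nat) (A B : hlalg R n) (f : A -> B) : Prop :=
  extension f /\
  (forall (x : 'I_n -> A) (i : 'I_n),
     (forall j : 'I_n, j != i -> exists m : A, f m = 0 /\ x j = twist m) ->
     bracket x = 0).

Definition universal_alpha_central_ext (R : fieldType) (n : nat) (A B : hlalg R n)
  (f : A -> B) : Prop :=
  central_ext f /\
  forall (C : hlalg R n) (g : C -> B), alpha_central_ext g ->
    exists h : A -> C,
      [/\ is_hom h, (forall a, g (h a) = f a) &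
          forall h' : A -> C, is_hom h' -> (forall a, g (h' a) = f a) ->
            forall a, h' a = h a].

(* The composite is alpha-central by a Hom-Leibniz computation: an n-ary bracket in F
   whose entries other than the i-th are twists of elements central modulo N, and whose
   i-th entry is itself a bracket, vanishes, because the Leibniz identity rewrites it as
   a bracket with a central entry.  Perfectness of K writes every element of F as a
   combination of such brackets plus an element of the central kernel N.  For the
   splitting, universality yields h : K -> F over L; then rho o h and id_K are two
   homomorphisms K -> K over the alpha-central extension pi, hence equal. *)

From Stdlib Require Import FunctionalExtensionality IndefiniteDescription.
From mathcomp Require Import all_boot all_order all_algebra.
Set Implicit Arguments. Unset Strict Implicit. Unset Printing Implicit Defensive.
Import GRing.Theory.
Local Open Scope ring_scope.

Section LinearMaps.
Variables (R : fieldType) (U V : lmodType R) (f : U -> V).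
Hypothesis f_lin : is_lin f.

Lemma is_linD u v : f (u + v) = f u + f v.
Proof. by have := f_lin 1 u v; rewrite !scale1r. Qed.

Lemma is_lin0 : f 0 = 0.
Proof.
have := f_lin (-1) 0 0; rewrite scaler0 addr0 scaleN1r => e.
by rewrite {1}e addNr.
Qed.

Lemma is_linB u v : f (u - v) = f u - f v.
Proof. by rewrite -scaleN1r addrC f_lin scaleN1r addrC. Qed.

Lemma is_lin_sum (T : Type) (G : T -> U) (s : seq (R * T)) :
  f (\sum_(p <- s) p.1 *: G p.2) = \sum_(p <- s) p.1 *: f (G p.2).
Proof.
elim: s => [|p s IH]; first by rewrite !big_nil is_lin0.
by rewrite !big_cons f_lin IH.
Qed.

End LinearMaps.

Lemma exists_ord_neq (n : nat) : (2 <= n)%N -> forall i : 'I_n, exists j : 'I_n, j != i.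
Proof.
case: n => [|[|n]] // _ i.
by case: (eqVneq i ord0) => [->|]; [exists ord_max | exists ord0; rewrite eq_sym].
Qed.

Section HomLeibniz.
Variables (R : fieldType) (n : nat).

Lemma bracket_center_eq0 (A : hlalg R n) (x : 'I_n -> A) (j : 'I_n) :
  in_center (x j) -> bracket x = 0.
Proof.
move=> xj_center; have -> : x = upd x j (x j).
  by apply: functional_extensionality => k; rewrite /upd; case: eqP => [->|].
exact: xj_center.
Qed.

Lemma is_hom_comp (A B C : hlalg R n) (f : A -> B) (g : B -> C) :
  is_hom f -> is_hom g -> is_hom (fun a => g (f a)).
Proof.
move=> [f_lin f_br f_tw] [g_lin g_br g_tw]; split.
- by move=> a u v; rewrite f_lin g_lin.
- by move=> x; rewrite f_br g_br.
- by move=> a; rewrite f_tw g_tw.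
Qed.

Lemma extension_comp (A B C : hlalg R n) (f : A -> B) (g : B -> C) :
  extension f -> extension g -> extension (fun a => g (f a)).
Proof.
move=> [f_hom f_surj] [g_hom g_surj]; split; first exact: is_hom_comp.
by move=> c; have [b <-] := g_surj c; have [a <-] := f_surj b; exists a.
Qed.

Lemma central_ext_alpha_central (A B : hlalg R n) (f : A -> B) :
  (2 <= n)%N -> central_ext f -> alpha_central_ext f.
Proof.
move=> n_ge2 [f_ext f_center]; split=> // x i x_twisted.
have [[_ _ f_tw] _] := f_ext.
have [j ji] := exists_ord_neq n_ge2 i.
have [m [fm0 xj]] := x_twisted j ji.
apply: (@bracket_center_eq0 _ _ j); rewrite xj; apply: f_center.
by rewrite f_tw fm0 (is_lin0 (@twist_linear _ _ B)).
Qed.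

Lemma twist_central_bracket_eq0 (F K : hlalg R n) (rho : F -> K) :
  (2 <= n)%N -> central_ext rho ->
  forall (i : 'I_n) (m : 'I_n -> F),
  (forall j, j != i -> in_center (rho (m j))) ->
  forall y : 'I_n -> F, bracket (upd (fun j => twist (m j)) i (bracket y)) = 0.
Proof.
move=> n_ge2 [[[_ rho_br _] _] rho_center] i m m_center y.
pose i0 : 'I_n := Ordinal (leq_trans (isT : (0 < 2)%N) n_ge2).
pose x j := if j == i then y i0 else m j.
have bracket_center (z : 'I_n -> F) l k :
    k != i -> z l = m k -> in_center (bracket z).
  move=> ki zlk; apply: rho_center; rewrite rho_br.
  by apply: (@bracket_center_eq0 _ _ l); rewrite /= zlk; exact: m_center.
have [j ji] := exists_ord_neq n_ge2 i.
have leibniz := hom_leibniz x y.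
(* In the Leibniz identity for [x] and [y], the left side and every summand but the
   i-th have a bracket with an entry [m k], [k != i], in some position. *)
rewrite (@bracket_center_eq0 _ _ i0) in leibniz; last first.
  by rewrite eqxx; apply: (bracket_center _ j j ji); rewrite /x (negbTE ji).
rewrite (bigD1 i) //= big1 ?addr0 in leibniz; last first.
  move=> k ki; apply: (@bracket_center_eq0 _ _ k); rewrite eqxx.
  by apply: (bracket_center _ i0 k ki); rewrite eqxx /x (negbTE ki).
rewrite leibniz; congr bracket; apply: functional_extensionality => k.
rewrite /upd /x; case: eqP => // _; congr bracket.
apply: functional_extensionality => l; case: eqP => // l0.
by rewrite eqxx; congr y; apply: val_inj.
Qed.

Lemma perfect_ext_decomp (F K : hlalg R n) (rho : F -> K) :
  extension rho -> perfect K ->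
  forall a : F, exists s : seq (R * ('I_n -> F)),
    rho (a - \sum_(p <- s) p.1 *: bracket p.2) = 0.
Proof.
move=> [[rho_lin rho_br _] rho_surj] K_perfect a.
have [lift liftK] := functional_choice _ rho_surj.
have [s rho_a] := K_perfect (rho a).
exists [seq (p.1, fun j => lift (p.2 j)) | p <- s].
rewrite (is_linB rho_lin) (is_lin_sum rho_lin) big_map rho_a; apply/eqP; rewrite subr_eq0.
apply/eqP/eq_bigr => p _; rewrite rho_br; congr (_ *: bracket _).
by apply: functional_extensionality => j; rewrite liftK.
Qed.

Lemma central_ext_comp_alpha_central (L K F : hlalg R n) (pi : K -> L) (rho : F -> K) :
  (2 <= n)%N -> central_ext pi -> central_ext rho -> perfect K ->
  alpha_central_ext (fun a => pi (rho a)).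
Proof.
move=> n_ge2 [pi_ext pi_center] rho_central K_perfect.
have [rho_ext rho_center] := rho_central.
split; first exact: extension_comp.
move=> x i x_twisted.
have m_exists j : exists m, j != i -> pi (rho m) = 0 /\ x j = twist m.
  case: (boolP (j != i)) => [ji | _]; last by exists 0.
  by have [m m_spec] := x_twisted j ji; exists m.
have [m m_spec] := functional_choice _ m_exists.
pose g v := bracket (upd (fun j => twist (m j)) i v).
have g_lin : is_lin g := bracket_multilinear _ _.
have -> : bracket x = g (x i).
  congr bracket; apply: functional_extensionality => j.
  by rewrite /upd; case: eqP => [->|/eqP ji] //; case: (m_spec j ji).
have m_center j : j != i -> in_center (rho (m j)).
  by move=> ji; apply: pi_center; case: (m_spec j ji).
have [s rho_rest] := perfect_ext_decomp rho_ext K_perfect (x i).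
set t := \sum_(p <- s) _ in rho_rest.
have g_t : g t = 0.
  rewrite /t (is_lin_sum g_lin) big1 // => p _.
  by rewrite /g (twist_central_bracket_eq0 n_ge2 rho_central m_center) scaler0.
rewrite -(subrK t (x i)) (is_linD g_lin) g_t addr0.
exact: rho_center _ rho_rest _ i.
Qed.

Lemma universal_alpha_central_ext_endo_id (A B : hlalg R n) (f : A -> B) (g : A -> A) :
  (2 <= n)%N -> universal_alpha_central_ext f ->
  is_hom g -> (forall a, f (g a) = f a) -> forall a, g a = a.
Proof.
move=> n_ge2 [f_central f_universal] g_hom fg a.
have [h [_ _ h_unique]] := f_universal A f (central_ext_alpha_central n_ge2 f_central).
have id_hom : is_hom (@id A) by split.
by rewrite (h_unique g g_hom fg a) -(h_unique id id_hom (fun _ => erefl) a).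
Qed.

End HomLeibniz.

Theorem lemma3p10 (R : fieldType) (n : nat) (hn : (2 <= n)%N)
  (L K F : hlalg R n) (pi : K -> L) (rho : F -> K)
  (hpi : central_ext pi) (hrho : central_ext rho) (hK : perfect K) :
  alpha_central_ext (fun x : F => pi (rho x)) /\
  (universal_alpha_central_ext pi ->
     exists sigma : K -> F, is_hom sigma /\ forall k : K, rho (sigma k) = k).
Proof.
have comp_alpha_central := central_ext_comp_alpha_central hn hpi hrho hK.
split=> // pi_universal.
have [h [h_hom pi_rho_h _]] := pi_universal.2 F _ comp_alpha_central.
exists h; split=> // k.
have rho_hom : is_hom rho by case: hrho => [[]].
exact: (universal_alpha_central_ext_endo_id hn pi_universal (is_hom_comp h_hom rho_hom)).
Qed.
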